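(* Let $S$ be a numerical semigroup. If $d \in S \setminus \{0\}$, then there is an $A \in \mathsf{M}_d(\mathbb{Q})$ such that $\mathcal{S}(A) = S$. In particular, $\dim_{\mathrm{mat}} S \leq m(S) = \min (S \setminus \{0\})$.
   Context: $\mathbb{N} = \{0,1,2,\ldots\}$. A semigroup means an additive subsemigroup of $\mathbb{N}$ containing $0$; a numerical semigroup is a semigroup with finite complement in $\mathbb{N}$. Its multiplicity $m(S)$ is the smallest nonzero element of $S$. $\mathsf{M}_d(X)$ denotes the $d\times d$ matrices with entries in $X$. For $A \in \mathsf{M}_d(\mathbb{Q})$, $\mathcal{S}(A) = \{ n \in \mathbb{N} : A^n \in \mathsf{M}_d(\mathbb{Z})\}$. The matricial dimension $\dim_{\mathrm{mat}} S$ of a semigroup $S$ is the smallest $d$ such that $S = \mathcal{S}(A)$ for some $A \in \mathsf{M}_d(\mathbb{Q})$. *)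

From mathcomp Require Import all_boot all_order all_algebra.
Set Implicit Arguments. Unset Strict Implicit. Unset Printing Implicit Defensive.
Import Order.TTheory GRing.Theory Num.Theory.
Local Open Scope ring_scope.

Definition is_semigroup (S : nat -> Prop) : Prop :=
  S 0%N /\ (forall a b : nat, S a -> S b -> S (a + b)%N).

Definition is_numerical_semigroup (S : nat -> Prop) : Prop :=
  is_semigroup S /\ exists N : nat, forall n : nat, (N <= n)%N -> S n.

Definition is_multiplicity (S : nat -> Prop) (m : nat) : Prop :=
  S m /\ (0 < m)%N /\ (forall n : nat, S n -> (0 < n)%N -> (m <= n)%N).

Definition mxpow (d : nat) (A : 'M[rat]_d) (n : nat) : 'M[rat]_d :=
  iter n (mulmx A) 1%:M.

Definition is_int_mx (d : nat) (A : 'M[rat]_d) : Prop :=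
  forall i j : 'I_d, A i j \is a Num.int.

Definition SA (d : nat) (A : 'M[rat]_d) : nat -> Prop :=
  fun n => is_int_mx (mxpow A n).

Definition realizable_in_dim (S : nat -> Prop) (d : nat) : Prop :=
  exists A : 'M[rat]_d, forall n : nat, S n <-> SA A n.

Definition is_dim_mat (S : nat -> Prop) (k : nat) : Prop :=
  realizable_in_dim S k /\ (forall d : nat, realizable_in_dim S d -> (k <= d)%N).

(** For [d] in [S \ {0}] let [w r] be the least element of [S] congruent to
    [r] modulo [d] (the Apéry set of [S] with respect to [d]); since [d] is in
    [S], a natural number [m] lies in [S] exactly when [w m <= m], i.e. when the
    level [l m = m/d - w m/d] is nonnegative.  The level grows by one when [m]
    grows by [d], so its increments are [d]-periodic and the weighted cyclic
    shift [A] sending [e_j] to [2^(l (j+1) - l j) e_(j+1 mod d)] is well defined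
    on [Z/dZ]; its powers are [A^n e_j = 2^(l (j+n) - l j) e_(j+n mod d)].
    Hence [A^n] is integral iff [l j <= l (j+n)] for all [j < d]: for [n] in
    [S] this holds because [w j + n] is in [S], and conversely [j = 0] gives
    [0 = l 0 <= l n], i.e. [n] in [S]. *)

From mathcomp Require Import all_boot all_order all_algebra.
From mathcomp Require Import boolp zify.
Import Order.TTheory GRing.Theory Num.Theory.

Local Open Scope ring_scope.

Lemma expz_natr_int (p : nat) (z : int) : (1 < p)%N ->
  (p%:R ^ z \is a @Num.int rat) = (0 <= z).
Proof.
move=> p_gt1; case: z => k; first by rewrite le0z_nat rpredX ?natr_int.
rewrite -[p%:R ^ Negz k]/((p%:R ^+ k.+1)^-1); apply/negbTE/negP.
rewrite intrEge0 ?invr_ge0 ?exprn_ge0 // => /natrP [m pV].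
have /eqP : (m * p ^ k.+1)%N%:R = 1 :> rat.
  by rewrite natrM natrX -pV mulVf // expf_neq0 // pnatr_eq0; lia.
by rewrite pnatr_eq1 muln_eq1 expnS muln_eq1 => /and3P[_ /eqP p1 _]; lia.
Qed.

Section WeightedShift.

Variables (p d : nat) (g : nat -> int).
Hypothesis p_gt1 : (1 < p)%N.
Hypothesis d_gt0 : (0 < d)%N.
Hypothesis g_step_periodic :
  forall m, g m.+1 - g m = g (m %% d).+1 - g (m %% d).

Definition weighted_shift_mx : 'M[rat]_d :=
  \matrix_(i, j)
    if (i : nat) == (j.+1 %% d)%N then p%:R ^ (g j.+1 - g j) else 0.

Lemma mxpow_weighted_shift n (i j : 'I_d) :
  mxpow weighted_shift_mx n i j =
    if (i : nat) == ((j + n) %% d)%N then p%:R ^ (g (j + n) - g j) else 0.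
Proof.
elim: n i => [|n IHn] i.
  by rewrite /mxpow /= mxE addn0 modn_small // subrr expr0z val_eqE; case: eqP.
have jn_lt_d : ((j + n) %% d < d)%N by rewrite ltn_mod.
rewrite /mxpow iterS -/(mxpow _ n) mxE (bigD1 (Ordinal jn_lt_d)) //= big1.
  rewrite IHn eqxx mxE addr0 /= -[in RHS]addSnnS -addn1 modnDml addn1.
  case: eqP => _; last by rewrite mul0r.
  rewrite -expfzDr ?pnatr_eq0; last by lia.
  by rewrite addn1 -g_step_periodic addSn addrA subrK.
move=> k /negbTE k_neq; rewrite IHn ifN ?mulr0 //.
by apply: contraFN k_neq => /eqP k_eq; apply/eqP/val_inj.
Qed.

Lemma SA_weighted_shift n :
  SA weighted_shift_mx n <-> forall j : 'I_d, g j <= g (j + n).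
Proof.
split=> [A_int j | g_le i j].
  have jn_lt_d : ((j + n) %% d < d)%N by rewrite ltn_mod.
  move: (A_int (Ordinal jn_lt_d) j).
  by rewrite mxpow_weighted_shift eqxx expz_natr_int // subr_ge0.
rewrite mxpow_weighted_shift; case: ifP => _; last exact: rpred0.
by rewrite expz_natr_int // subr_ge0.
Qed.

End WeightedShift.

Lemma semigroup_muln (S : nat -> Prop) k a :
  is_semigroup S -> S a -> S (k * a)%N.
Proof.
move=> [S0 SD] Sa; elim: k => [|k IHk]; first by rewrite mul0n.
by rewrite mulSn; apply: SD.
Qed.

Section Apery.

Variables (S : nat -> Prop) (d : nat).
Hypothesis S_numerical : is_numerical_semigroup S.
Hypothesis d_gt0 : (0 < d)%N.

Let S_semigroup : is_semigroup S := S_numerical.1.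

Lemma apery_exists r : exists s, `[< S s >] && (s == r %[mod d])%N.
Proof.
have [N S_ge] := S_numerical.2.
exists (N * d + r); rewrite modnMDl eqxx andbT; apply/asboolP/S_ge; nia.
Qed.

Definition apery r : nat := ex_minn (apery_exists r).

Lemma apery_spec r :
  [/\ S (apery r), (apery r = r %[mod d])%N
    & forall s, S s -> (s = r %[mod d])%N -> (apery r <= s)%N].
Proof.
rewrite /apery; case: ex_minnP => w /andP[/asboolP Sw /eqP w_mod] w_min.
by split=> // s Ss s_mod; apply: w_min; rewrite s_mod eqxx andbT; apply/asboolP.
Qed.

Lemma eq_apery r r' : (r = r' %[mod d])%N -> apery r = apery r'.
Proof.
have [Sw w_mod w_min] := apery_spec r.
have [Sw' w'_mod w'_min] := apery_spec r'.
move=> r_mod; apply/anti_leq/andP; split.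
  by apply: w_min; rewrite ?w'_mod.
by apply: w'_min; rewrite ?w_mod.
Qed.

Definition level m : int := (m %/ d)%:Z - (apery m %/ d)%:Z.

Lemma level0 : level 0 = 0.
Proof.
have [_ _ w_min] := apery_spec 0.
move: (w_min 0%N S_semigroup.1 erefl); rewrite leqn0 => /eqP w0.
by rewrite /level w0 subrr.
Qed.

Lemma level_mulnD q m : level (q * d + m)%N = level m + q%:Z.
Proof.
rewrite /level (@eq_apery (q * d + m) m) ?modnMDl // divnMDl // PoszD; lia.
Qed.

Lemma level_step_periodic m :
  level m.+1 - level m = level (m %% d).+1 - level (m %% d).
Proof.
rewrite {1 2}(divn_eq m d) -addnS !level_mulnD; lia.
Qed.

Lemma level_le_addr n i : S n -> level i <= level (i + n)%N.
Proof.
move=> Sn; have [Swi wi_mod _] := apery_spec i.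
have [_ _ w_min] := apery_spec (i + n).
have w_le : (apery (i + n) <= apery i + n)%N.
  by apply: w_min; [exact: S_semigroup.2 | rewrite -modnDml wi_mod modnDml].
have divnD_mod x : ((x + n) %/ d = x %/ d + (x %% d + n) %/ d)%N.
  by rewrite {1}(divn_eq x d) -addnA divnMDl.
move: (leq_div2r d w_le).
rewrite /level (divnD_mod i) (divnD_mod (apery i)) wi_mod; lia.
Qed.

Hypothesis d_in_S : S d.

Lemma level_ge0 m : 0 <= level m <-> S m.
Proof.
have [Sw w_mod w_min] := apery_spec m.
rewrite /level subr_ge0 lez_nat; split=> [le_div | Sm]; last first.
  exact/leq_div2r/w_min.
have -> : m = (apery m + (m %/ d - apery m %/ d) * d)%N.
  have : (apery m %/ d * d <= m %/ d * d)%N by rewrite leq_mul2r le_div orbT.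
  move: (divn_eq m d) (divn_eq (apery m) d); rewrite w_mod mulnBl; lia.
by apply: S_semigroup.2 => //; apply: semigroup_muln.
Qed.

Lemma numerical_semigroup_realizable : realizable_in_dim S d.
Proof.
exists (weighted_shift_mx 2 d level) => n.
rewrite SA_weighted_shift //; last exact: level_step_periodic.
split=> [Sn j | level_le]; first exact: level_le_addr.
by apply/level_ge0; rewrite -level0; exact: (level_le (Ordinal d_gt0)).
Qed.

End Apery.

Theorem theorem2p2 (S : nat -> Prop) :
  is_numerical_semigroup S ->
  (forall d : nat, S d -> d <> 0%N ->
     exists A : 'M[rat]_d, forall n : nat, S n <-> SA A n)
  /\
  (forall m k : nat, is_multiplicity S m -> is_dim_mat S k -> (k <= m)%N).
Proof.
move=> S_numerical.
have realizable d : S d -> d <> 0%N -> realizable_in_dim S d.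
  move=> Sd /eqP d_neq0.
  by apply: numerical_semigroup_realizable; rewrite ?lt0n.
split=> // m k [Sm [m_gt0 _]] [_ k_min].
by apply/k_min/realizable => //; lia.
Qed.
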